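(* Let $\beta\in(-2,-1)$ and $c\in(0,1)$. For integers $n\ge 3$ let $x_{1,n}<\dots<x_{n,n}$ denote the zeros of the monic Meixner polynomial $M_n(x;\beta,c)$ (when real), let $y_{1,n}<\dots<y_{n,n}$ denote the zeros of $M_n(x;\beta+2,c)$, and put $A_n=\frac{\beta}{c-1}-\beta-n-1$. (a) If $n\geq \frac{\beta}{c-1}-(\beta+1)$, then $A_n\leq 0$ and $$x_{1,n}<y_{1,n}<x_{2,n}<y_{2,n}<\dots<x_{n,n}<y_{n,n}.$$ (b) There is at most one integer $n^*$ with $\frac{\beta}{c-1}-(\beta+2)<n^*<\frac{\beta}{c-1}-(\beta+1)$, and for such $n^*$ one has $0<A_{n^*}<1$. If moreover $n^*\in\left(\frac{\beta}{c-1},\frac{\beta}{c-1}-(\beta+1)\right)$, then the zeros of $M_{n^*}(x;\beta,c)$ and $M_{n^*}(x;\beta+2,c)$ satisfy $x_{1,n^*}<y_{1,n^*}<x_{2,n^*}<y_{2,n^*}<\dots<x_{n^*,n^*}<y_{n^*,n^*}$ if and only if $A_{n^*}<y_{1,n^*}$.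
   Context: Monic Meixner polynomials are defined by $$M_n(x;\beta,c)=\left(\frac{c}{c-1}\right)^n(\beta)_n\sum_{k=0}^{n}\frac{(-n)_k(-x)_k(1-\frac1c)^k}{(\beta)_k\,k!},$$ for real $\beta,c$ with $c\neq 0$ and $\beta\notin\{-1,-2,\dots,-n+1\}$, where $(\alpha)_0=1$ and $(\alpha)_k=\alpha(\alpha+1)\cdots(\alpha+k-1)$ for $k\geq1$. For $\beta+2>0$ and $c\in(0,1)$ the polynomials $M_n(x;\beta+2,c)$ are orthogonal and have real, simple, positive zeros; for $\beta\in(-2,-1)$, $c\in(0,1)$ and $n>\frac{\beta}{c-1}$, the zeros of $M_n(x;\beta,c)$ are real, simple and positive. *)

From HB Require Import structures.
From mathcomp Require Import all_boot all_order all_algebra.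
Set Implicit Arguments. Unset Strict Implicit. Unset Printing Implicit Defensive.
Import Order.TTheory GRing.Theory Num.Theory.
Local Open Scope ring_scope.

Definition poch (R : realFieldType) (a : R) (k : nat) : R :=
  \prod_(i < k) (a + i%:R).

(* the polynomial x |-> (-x)_k *)
Definition pochNX (R : realFieldType) (k : nat) : {poly R} :=
  \prod_(i < k) (i%:R%:P - 'X).

Definition meixner (R : realFieldType) (n : nat) (beta c : R) : {poly R} :=
  ((c / (c - 1)) ^+ n * poch beta n) *:
  \sum_(k < n.+1)
     ((poch (- n%:R) k * (1 - c^-1) ^+ k / (poch beta k * k`!%:R)) *: pochNX R k).

Definition zeros_enum (R : realFieldType) (p : {poly R}) (n : nat) (xs : seq R) : Prop :=
  [/\ size xs = n, sorted <%R xs, (forall x, x \in xs -> root p x)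
    & (forall x, root p x -> x \in xs)].

(* x_1 < y_1 < x_2 < y_2 < ... < x_n < y_n (0-based indices) *)
Definition interlace (R : realFieldType) (n : nat) (xs ys : seq R) : Prop :=
  forall i, (i < n)%N -> xs`_i < ys`_i /\ ((i.+1 < n)%N -> ys`_i < xs`_i.+1).

Definition A_n (R : realFieldType) (beta c : R) (n : nat) : R :=
  beta / (c - 1) - beta - n%:R - 1.

(* For b > 0 the polynomials M_n(x; b, c) satisfy a three-term recurrence
   M_(n+1) = (x - b_n) M_n - lambda_n M_(n-1) with lambda_n > 0, so by counting sign
   changes the zeros of M_(n+1)(x; b, c) and M_n(x; b, c) strictly interlace.
   For b = beta + 2, write y_i and z_i for the zeros of M_n(x; beta+2, c) and
   M_(n-1)(x; beta+2, c). The contiguous relation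
     M_n(x; beta, c) = C M_n(x; beta+2, c) + D (x - A_n) M_(n-1)(x; beta+2, c),
   in which C, D > 0 and C + D = 1 as soon as n > beta/(c-1), makes M_n(x; beta, c)
   take the sign of M_n(x; beta+2, c) at every z_i, so its zeros x_i interlace with
   the z_i as well. At y_i only D (y_i - A_n) M_(n-1)(y_i; beta+2, c) survives, and
   its sign says that x_i < y_i exactly when A_n < y_i. Since the y_i increase and
   are positive, all the comparisons x_i < y_i hold iff A_n < y_1, which is automatic
   when A_n <= 0. *)

From HB Require Import structures.
From mathcomp Require Import all_boot all_order all_algebra.
From mathcomp Require Import polyrcf.
From mathcomp Require Import ring lra.
Import Order.TTheory GRing.Theory Num.Theory.
Local Open Scope ring_scope.
Set Implicit Arguments. Unset Strict Implicit. Unset Printing Implicit Defensive.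

Lemma monic_affine (R : nzRingType) (p q : {poly R}) (a b : R) :
  p \is monic -> q \is monic -> size p = size q -> a + b = 1 ->
  (a *: p + b *: q \is monic) && (size (a *: p + b *: q) == size p).
Proof.
move=> mon_p mon_q size_pq ab1; set r := a *: p + b *: q.
have size_r : (size r <= size p)%N.
  rewrite (leq_trans (size_polyD _ _)) // geq_max.
  by rewrite !(leq_trans (size_scale_leq _ _)) ?size_pq.
have coef_r : r`_(size p).-1 = 1.
  rewrite coefD !coefZ -lead_coefE size_pq -lead_coefE.
  by rewrite (monicP mon_p) (monicP mon_q) !mulr1.
have size_r_eq : size r = size p.
  apply/eqP; rewrite eqn_leq size_r leqNgt; apply/negP => lt_rp; move: coef_r.
  rewrite nth_default => [/eqP|]; first by rewrite eq_sym oner_eq0.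
  by rewrite -ltnS prednK // size_poly_gt0 monic_neq0.
by rewrite monicE lead_coefE size_r_eq coef_r !eqxx.
Qed.

Section SignChanges.
Variable R : rcfType.
Implicit Types (p : {poly R}) (g r y z : nat -> R).

Lemma nat_choice (P : nat -> R -> Prop) k :
  (forall j, (j < k)%N -> exists x, P j x) ->
  exists r, forall j, (j < k)%N -> P j (r j).
Proof.
elim: k => [|k IH] hP; first by exists (fun _ => 0).
have [r hr] := IH (fun j lt_jk => hP j (ltnW lt_jk)).
have [x hx] := hP k (ltnSn k).
exists (fun j => if j == k then x else r j) => j; rewrite ltnS leq_eqVlt.
by case: eqP => [-> //|_ /= /hr].
Qed.

Definition increasing n r := forall i, (i.+1 < n)%N -> r i < r i.+1.

Lemma increasing_lt n r : increasing n r ->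
  forall i j, (i < j)%N -> (j < n)%N -> r i < r j.
Proof.
move=> incr i j; elim: j => // j IH; rewrite ltnS leq_eqVlt.
case/predU1P => [-> /incr //|lt_ij lt_jn].
exact: lt_trans (IH lt_ij (ltnW lt_jn)) (incr _ lt_jn).
Qed.

Lemma increasing_le n r : increasing n r ->
  forall i j, (i <= j)%N -> (j < n)%N -> r i <= r j.
Proof.
move=> incr i j; rewrite leq_eqVlt => /predU1P[-> //|lt_ij lt_jn].
exact/ltW/(increasing_lt incr).
Qed.

Lemma sgn_horner_prod_XsubC r k m (x : R) : (m <= k)%N ->
  (forall i, (i < m)%N -> r i < x) -> (forall i, (m <= i < k)%N -> x < r i) ->
  0 < (-1) ^+ (k - m) * (\prod_(i < k) ('X - (r i)%:P)).[x].
Proof.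
move=> le_mk r_lt r_gt; rewrite horner_prod -(subnKC le_mk) big_split_ord /= addKn.
rewrite mulrCA -[in (-1) ^+ _](card_ord (k - m)) -prodrN.
apply: mulr_gt0; apply: prodr_gt0 => i _; rewrite !hornerE ?opprB subr_gt0.
  exact: r_lt.
by apply: r_gt; rewrite leq_addr /= -ltn_subRL.
Qed.

Lemma big_mkseq_XsubC r k :
  \prod_(i < k) ('X - (r i)%:P) = \prod_(x <- mkseq r k) ('X - x%:P).
Proof.
by rewrite big_map -(big_mkord xpredT (fun i => 'X - (r i)%:P)) /index_iota subn0.
Qed.

Lemma size_prod_XsubC_ord r k : size (\prod_(i < k) ('X - (r i)%:P)) = k.+1.
Proof. by rewrite big_mkseq_XsubC size_prod_XsubC size_mkseq. Qed.

Lemma root_prod_XsubC_ord r k i : (i < k)%N ->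
  root (\prod_(l < k) ('X - (r l)%:P)) (r i).
Proof. by move=> lt_ik; rewrite big_mkseq_XsubC root_prod_XsubC map_f // mem_iota. Qed.

Lemma sorted_mkseq r k : increasing k r -> sorted <%R (mkseq r k).
Proof.
move=> incr; apply/(sortedP 0) => i; rewrite size_mkseq => lt_ik.
by rewrite !nth_mkseq ?incr // ltnW.
Qed.

Lemma zeros_enum_prod_XsubC r k : increasing k r ->
  zeros_enum (\prod_(i < k) ('X - (r i)%:P)) k (mkseq r k).
Proof.
move=> incr; split; rewrite ?size_mkseq ?sorted_mkseq //;
  by move=> x; rewrite big_mkseq_XsubC root_prod_XsubC.
Qed.

Lemma zeros_enum_uniq p n xs ys : zeros_enum p n xs -> zeros_enum p n ys -> xs = ys.
Proof.
move=> [_ sorted_xs xs_root root_xs] [_ sorted_ys ys_root root_ys].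
apply: lt_sorted_eq => // x.
by apply/idP/idP => [/xs_root/root_ys | /ys_root/root_xs].
Qed.

Lemma monic_sign_changes_roots p k g :
  p \is monic -> size p = k.+1 -> increasing k.+1 g ->
  (forall j, (j <= k)%N -> 0 < (-1) ^+ (k - j) * p.[g j]) ->
  exists r, p = \prod_(i < k) ('X - (r i)%:P) /\
            forall j, (j < k)%N -> g j < r j < g j.+1.
Proof.
move=> mon_p size_p incr_g sgn_p.
have [r hr] : exists r, forall j, (j < k)%N -> (g j < r j < g j.+1) && root p (r j).
  apply: (nat_choice (P := fun j x => (g j < x < g j.+1) && root p x)) => j lt_jk.
  have : p.[g j] * p.[g j.+1] < 0.
    have := mulr_gt0 (sgn_p j (ltnW lt_jk)) (sgn_p j.+1 lt_jk).
    by rewrite -subnSK // exprS mulN1r !mulNr oppr_gt0 mulrACA -expr2 sqrr_sign mul1r.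
  case/(poly_ivtoo (ltW (incr_g j lt_jk))) => x; rewrite in_itv /= => x_in root_x.
  by exists x; rewrite x_in.
exists r; split=> [|j /hr/andP[] //].
have incr_r : increasing k r.
  move=> i lt_ik; have /andP[/andP[_ lt1] _] := hr i (ltnW lt_ik).
  by have /andP[/andP[lt2 _] _] := hr i.+1 lt_ik; apply: lt_trans lt2.
rewrite big_mkseq_XsubC {1}(@all_roots_prod_XsubC _ p (mkseq r k)).
- by rewrite (monicP mon_p) scale1r.
- by rewrite size_mkseq.
- by apply/allP => x /mapP[i]; rewrite mem_iota => /andP[_ /hr/andP[_ ?] ->].
- rewrite uniq_rootsE.
  by move: (sorted_mkseq incr_r); rewrite lt_sorted_uniq_le => /andP[].
Qed.

Lemma monic_sgn_minfty p x : p \is monic -> x <= - cauchy_bound p ->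
  0 < (-1) ^+ (size p).-1 * p.[x].
Proof.
move=> mon_p le_x; rewrite -sgr_gt0 sgrM.
rewrite (sgp_minftyP (le_cauchy_bound (monic_neq0 mon_p))) ?in_itv //=.
by rewrite /sgp_minfty (monicP mon_p) mulr1 -sgrM -expr2 sqrr_sign sgr1 ltr01.
Qed.

Lemma monic_sgn_pinfty p x : p \is monic -> cauchy_bound p <= x -> 0 < p.[x].
Proof.
move=> mon_p le_x; rewrite -sgr_gt0.
rewrite (sgp_pinftyP (ge_cauchy_bound (monic_neq0 mon_p))) ?in_itv ?andbT //=.
by rewrite /sgp_pinfty (monicP mon_p) sgr1 ltr01.
Qed.

Definition interleaved k y z := forall i, (i < k)%N -> y i < z i < y i.+1.

Lemma interleaved_increasing k y z :
  interleaved k y z -> increasing k.+1 y /\ increasing k z.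
Proof.
move=> yz; split=> i lt_ik.
  by have /andP[lt1 lt2] := yz i lt_ik; apply: lt_trans lt2.
have /andP[_ lt1] := yz i (ltnW lt_ik).
by have /andP[lt2 _] := yz i.+1 lt_ik; apply: lt_trans lt2.
Qed.

Lemma interleaved_sgn_inner k y z j : interleaved k y z -> (j <= k)%N ->
  0 < (-1) ^+ (k - j) * (\prod_(i < k) ('X - (z i)%:P)).[y j].
Proof.
move=> yz le_jk; have [incr_y _] := interleaved_increasing yz.
apply: sgn_horner_prod_XsubC => // i lt_ij.
  have /andP[_ lt_zy] := yz i (leq_trans lt_ij le_jk).
  exact: lt_le_trans lt_zy (increasing_le incr_y lt_ij le_jk).
case/andP: lt_ij => le_ji lt_ik; have /andP[lt_yz _] := yz i lt_ik.
exact: le_lt_trans (increasing_le incr_y le_ji (ltnW lt_ik)) lt_yz.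
Qed.

Lemma interleaved_sgn_outer k y z j : interleaved k y z -> (j < k)%N ->
  0 < (-1) ^+ (k - j) * (\prod_(i < k.+1) ('X - (y i)%:P)).[z j].
Proof.
move=> yz lt_jk; have [incr_y _] := interleaved_increasing yz.
have /andP[lt_yz lt_zy] := yz j lt_jk.
rewrite -subSS; apply: sgn_horner_prod_XsubC => [|i|i /andP[lt_ji lt_ik]].
- exact: ltnW.
- rewrite ltnS => le_ij.
  exact: le_lt_trans (increasing_le incr_y le_ij (ltnW lt_jk)) lt_yz.
- exact: lt_le_trans lt_zy (increasing_le incr_y lt_ji lt_ik).
Qed.

(* The Cauchy bound of p supplies the two outermost sign changes. *)
Lemma monic_interleaved_roots p k z :
  p \is monic -> size p = k.+2 -> increasing k z ->
  (forall j, (j < k)%N -> 0 < (-1) ^+ (k - j) * p.[z j]) ->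
  exists y, p = \prod_(i < k.+1) ('X - (y i)%:P) /\ interleaved k y z.
Proof.
move=> mon_p size_p incr_z sgn_p.
set b := cauchy_bound p.
set a := Num.min (- b) (z 0%N - 1); set N := Num.max b (z k.-1 + 1).
pose g j := if j == 0%N then a else if j == k.+1 then N else z j.-1.
have gS i : (i < k)%N -> g i.+1 = z i by rewrite /g /= eqSS => /ltn_eqF ->.
have gN : g k.+1 = N by rewrite /g eqxx.
have a_lt i : (i < k)%N -> a < z i.
  move=> lt_ik; rewrite gt_min ltrBlDr.
  by rewrite (le_lt_trans (increasing_le incr_z (leq0n i) lt_ik)) ?orbT // ltrDl.
have lt_N i : (i < k)%N -> z i < N.
  move=> lt_ik; have k_gt0 : (0 < k)%N by apply: leq_ltn_trans lt_ik.
  have le_zi : z i <= z k.-1.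
    by apply: (increasing_le incr_z); rewrite ?prednK // -ltnS prednK.
  by rewrite lt_max; apply/orP; right; apply: le_lt_trans le_zi _; rewrite ltrDl.
have g_lt_N i : (i <= k)%N -> g i < N.
  case: i => [_|i lt_ik]; last by rewrite gS // lt_N.
  have b_gt0 : 0 < b := cauchy_bound_gt0 p.
  have nb_lt_b : - b < b by lra.
  by rewrite /g /= lt_max !gt_min nb_lt_b.
have incr_g : increasing k.+2 g.
  move=> i; rewrite !ltnS leq_eqVlt => /predU1P[-> | ]; first by rewrite gN g_lt_N.
  case: i => [|i] lt_ik; first by rewrite gS // a_lt.
  by rewrite !gS ?incr_z // ltnW.
have sgn_g j : (j <= k.+1)%N -> 0 < (-1) ^+ (k.+1 - j) * p.[g j].
  case: j => [_|j].
    by rewrite subn0 -[k.+1]/(k.+2).-1 -size_p monic_sgn_minfty // ge_min lexx.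
  rewrite ltnS leq_eqVlt => /predU1P[-> | lt_jk].
    by rewrite subnn mul1r gN monic_sgn_pinfty // le_max lexx.
  by rewrite subSS gS // sgn_p.
have [y [-> g_y]] := monic_sign_changes_roots mon_p size_p incr_g sgn_g.
exists y; split=> // i lt_ik.
move: (g_y i (ltnW lt_ik)) (g_y i.+1 lt_ik).
by rewrite gS // => /andP[_ ->] /andP[-> _].
Qed.

Lemma interleaved_sgn_cmp k x y z i :
  interleaved k x z -> interleaved k y z -> (i <= k)%N ->
  (0 < (-1) ^+ (k - i) * (\prod_(l < k.+1) ('X - (x l)%:P)).[y i]) = (x i < y i).
Proof.
move=> xz yz le_ik.
have [[incr_x _] [incr_y _]] := (interleaved_increasing xz, interleaved_increasing yz).
have x_lt l : (l < i)%N -> x l < y i.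
  move=> lt_li; have lt_lk := leq_trans lt_li le_ik.
  have [/andP[lt_xz _] /andP[_ lt_zy]] := (xz l lt_lk, yz l lt_lk).
  exact: lt_trans lt_xz (lt_le_trans lt_zy (increasing_le incr_y lt_li le_ik)).
have x_gt l : (i < l < k.+1)%N -> y i < x l.
  case/andP=> lt_il lt_lk; have lt_ik := leq_trans lt_il lt_lk.
  have [/andP[_ lt_zx] /andP[lt_yz _]] := (xz i lt_ik, yz i lt_ik).
  exact: lt_trans lt_yz (lt_le_trans lt_zx (increasing_le incr_x lt_il lt_lk)).
case: (ltrgtP (x i) (y i)) => [lt_xy | lt_yx | <-].
- rewrite -subSS; apply: sgn_horner_prod_XsubC => // l.
  by rewrite ltnS leq_eqVlt => /predU1P[-> //|]; apply: x_lt.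
- apply/negbTE; rewrite -leNgt -oppr_ge0 -mulNr -mulN1r -exprS -subSn //.
  apply/ltW/sgn_horner_prod_XsubC => [|//|l]; first exact: leqW.
  by case/andP; rewrite leq_eqVlt => /predU1P[<- //| lt_il lt_lk]; apply/x_gt/andP.
- by rewrite (rootP (root_prod_XsubC_ord x (le_ik : (i < k.+1)%N))) mulr0 ltxx.
Qed.

End SignChanges.

Section Pochhammer.
Variable R : realFieldType.

Lemma poch0 (a : R) : poch a 0 = 1.
Proof. by rewrite /poch big_ord0. Qed.

Lemma pochS (a : R) k : poch a k.+1 = poch a k * (a + k%:R).
Proof. by rewrite /poch big_ord_recr. Qed.

Lemma pochSl (a : R) k : poch a k.+1 = a * poch (a + 1) k.
Proof.
rewrite /poch big_ord_recl /= addr0; congr (_ * _).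
by apply: eq_bigr => i _; rewrite /bump /= add1n -natr1; ring.
Qed.

Lemma poch_add2 (a : R) k : a + k.+1%:R != 0 ->
  poch a k.+1 = a * (a + 1) * poch (a + 2) k / (a + k.+1%:R).
Proof. by move=> nz; rewrite -[LHS](mulfK nz) -pochS !pochSl -addrA mulrA. Qed.

Lemma poch_oppn_eq0 n k : (n < k)%N -> poch (- n%:R : R) k = 0.
Proof. by move=> lt_nk; rewrite /poch (bigD1 (Ordinal lt_nk)) //= addNr mul0r. Qed.

Lemma poch_oppSn n k : poch (- n.+1%:R : R) k.+1 = - n.+1%:R * poch (- n%:R) k.
Proof. by rewrite pochSl -natr1 opprD addrNK. Qed.

Lemma poch_neq0 (a : R) k : (forall j, a + j%:R != 0) -> poch a k != 0.
Proof. by move=> a_nz; apply/prodf_neq0 => i _. Qed.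

Lemma poch_gt0 (a : R) k : 0 < a -> 0 < poch a k.
Proof. by move=> a_gt0; apply: prodr_gt0 => i _; apply: ltr_wpDr. Qed.

Lemma pochNX_S k : pochNX R k.+1 = pochNX R k * (k%:R%:P - 'X).
Proof. by rewrite /pochNX big_ord_recr. Qed.

Lemma mulXsubC_pochNX (a : R) k :
  ('X - a%:P) * pochNX R k = (k%:R - a) *: pochNX R k - pochNX R k.+1.
Proof. by rewrite pochNX_S -!mul_polyC polyCB; ring. Qed.

Definition pochNX_comb N (F : nat -> R) : {poly R} := \sum_(k < N) F k *: pochNX R k.

Lemma eq_pochNX_comb N F G : {in gtn N, F =1 G} -> pochNX_comb N F = pochNX_comb N G.
Proof. by move=> eqFG; apply: eq_bigr => i _; rewrite eqFG ?inE. Qed.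

Lemma pochNX_comb_widen M N F : (M <= N)%N -> (forall k, (M <= k)%N -> F k = 0) ->
  pochNX_comb N F = pochNX_comb M F.
Proof.
move=> le_MN F0.
rewrite /pochNX_comb (big_ord_widen N (fun k => F k *: pochNX R k) le_MN).
rewrite [RHS]big_mkcond; apply: eq_bigr => i _.
by case: ltnP => // /F0 ->; rewrite scale0r.
Qed.

Lemma pochNX_combD N F G :
  pochNX_comb N F + pochNX_comb N G = pochNX_comb N (fun k => F k + G k).
Proof. by rewrite -big_split; apply: eq_bigr => i _; rewrite scalerDl. Qed.

Lemma pochNX_combB N F G :
  pochNX_comb N F - pochNX_comb N G = pochNX_comb N (fun k => F k - G k).
Proof. by rewrite -sumrB; apply: eq_bigr => i _; rewrite scalerBl. Qed.

Lemma pochNX_combZ N a F : a *: pochNX_comb N F = pochNX_comb N (fun k => a * F k).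
Proof. by rewrite scaler_sumr; apply: eq_bigr => i _; rewrite scalerA. Qed.

Lemma mulXsubC_pochNX_comb N a F : F N = 0 ->
  ('X - a%:P) * pochNX_comb N F =
  pochNX_comb N.+1 (fun k => F k * (k%:R - a) - if k is j.+1 then F j else 0).
Proof.
move=> FN0; rewrite /pochNX_comb mulr_sumr.
under eq_bigr => i _ do rewrite -scalerAr mulXsubC_pochNX scalerBr scalerA.
under [RHS]eq_bigr => i _ do rewrite scalerBl.
by rewrite !sumrB big_ord_recr /= FN0 mul0r scale0r addr0 big_ord_recl /= scale0r add0r.
Qed.

End Pochhammer.

Section MeixnerRelations.
Variables (R : realFieldType) (c : R).
Hypotheses (c_gt0 : 0 < c) (c_lt1 : c < 1).

Let c_neq0 : c != 0. Proof. by rewrite gt_eqF. Qed.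
Let c_sub1_neq0 : c - 1 != 0. Proof. by rewrite subr_eq0 lt_eqF. Qed.
Let one_sub_c_neq0 : 1 - c != 0. Proof. by rewrite subr_eq0 gt_eqF. Qed.
Let fact_neq0 k : (k`!%:R : R) != 0. Proof. by rewrite pnatr_eq0 -lt0n fact_gt0. Qed.

Definition meixner_coef n (b : R) k :=
  poch (- n%:R) k * (1 - c^-1) ^+ k / (poch b k * k`!%:R).

Lemma meixnerE n b : meixner n b c =
  ((c / (c - 1)) ^+ n * poch b n) *: pochNX_comb n.+1 (meixner_coef n b).
Proof. by []. Qed.

Lemma meixner_coef_eq0 n b k : (n < k)%N -> meixner_coef n b k = 0.
Proof. by move=> lt_nk; rewrite /meixner_coef poch_oppn_eq0 // !mul0r. Qed.

Lemma meixnerE_widen n b N : (n < N)%N -> meixner n b c =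
  ((c / (c - 1)) ^+ n * poch b n) *: pochNX_comb N (meixner_coef n b).
Proof.
by move=> lt_nN; rewrite meixnerE (@pochNX_comb_widen _ n.+1) // => k /meixner_coef_eq0.
Qed.

Definition meixner_b (b : R) n := (n%:R + (n%:R + b) * c) / (1 - c).
Definition meixner_lambda (b : R) n := n%:R * (n%:R + b - 1) * c / (1 - c) ^+ 2.

Lemma meixner0 b : meixner 0 b c = 1.
Proof.
rewrite meixnerE /pochNX_comb big_ord1 /meixner_coef !poch0 /pochNX big_ord0 /=.
by rewrite !expr0 fact0 !(mul1r, mulr1, invr1, scale1r).
Qed.

Lemma meixner1 b : b != 0 -> meixner 1 b c = 'X - (meixner_b b 0)%:P.
Proof.
move=> b_nz.
have -> : 'X - (meixner_b b 0)%:P =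
    ('X - (meixner_b b 0)%:P) * pochNX_comb 1 (fun k => (k == 0%N)%:R).
  by rewrite /pochNX_comb big_ord1 /pochNX big_ord0 scale1r mulr1.
rewrite mulXsubC_pochNX_comb // meixnerE pochNX_combZ; apply: eq_pochNX_comb => -[|[|k]] // _.
  rewrite /meixner_coef !poch0 /= /poch big_ord1 /= !expr0 expr1 /meixner_b fact0; field.
  by rewrite one_sub_c_neq0 c_sub1_neq0.
rewrite /meixner_coef /= /poch !big_ord1 /= !expr1 /meixner_b factS fact0; field.
by rewrite one_sub_c_neq0 b_nz c_neq0 c_sub1_neq0.
Qed.

Lemma meixner_rec b m : (forall j, b + j%:R != 0) ->
  meixner m.+2 b c = ('X - (meixner_b b m.+1)%:P) * meixner m.+1 b c
                     - meixner_lambda b m.+1 *: meixner m b c.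
Proof.
move=> b_nz.
rewrite (@meixnerE_widen m.+2 b m.+3) // (@meixnerE_widen m.+1 b m.+2) //.
rewrite (@meixnerE_widen m b m.+3 (leqW (leqnSn _))) -scalerAr.
rewrite mulXsubC_pochNX_comb ?meixner_coef_eq0 //.
rewrite scalerA !pochNX_combZ pochNX_combB; apply: eq_pochNX_comb => -[_|j _].
  rewrite /meixner_coef !poch0 !expr0 fact0 !(mul1r, mulr1, invr1, mul0r, subr0).
  rewrite !pochS !exprS /meixner_b /meixner_lambda -!natr1.
  by field; rewrite one_sub_c_neq0 c_sub1_neq0.
have poch_m : poch (- m%:R : R) j.+1 = poch (- m.+1%:R) j * (- m.+1%:R + j%:R)
    * (- m.+1%:R + j.+1%:R) / (- m.+1%:R).
  have m_nz : (- m.+1%:R : R) != 0 by rewrite oppr_eq0 pnatr_eq0.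
  by apply: (mulfI m_nz); rewrite -poch_oppSn !pochS; field; rewrite nat1r pnatr_eq0.
rewrite /meixner_coef (poch_oppSn _ m.+1 j) poch_m (pochS (- m.+1%:R) j).
rewrite !pochS !exprS factS natrM.
have := poch_neq0 j b_nz; have := fact_neq0 j; have := b_nz j.
rewrite /meixner_b /meixner_lambda -!natr1 => bj_nz fj_nz pj_nz.
by field; rewrite !natr1 fj_nz bj_nz pj_nz c_neq0 one_sub_c_neq0 c_sub1_neq0 !pnatr_eq0.
Qed.

Lemma meixner_contiguous beta m : (forall j, beta + j%:R != 0) ->
  meixner m.+1 beta c =
    ((m.+1%:R * (1 - c) + beta) / (m.+1%:R + beta)) *: meixner m.+1 (beta + 2) c
  + (m.+1%:R * c / (m.+1%:R + beta)) *:
      (('X - (A_n beta c m.+1)%:P) * meixner m (beta + 2) c).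
Proof.
move=> beta_nz; have beta2_nz j : beta + 2 + j%:R != 0.
  by rewrite -addrA -natrD beta_nz.
rewrite (@meixnerE_widen m.+1 beta m.+2) // (@meixnerE_widen m.+1 (beta + 2) m.+2) //.
rewrite (@meixnerE_widen m (beta + 2) m.+1) // -scalerAr.
rewrite mulXsubC_pochNX_comb ?meixner_coef_eq0 //.
rewrite !scalerA !pochNX_combZ pochNX_combD; apply: eq_pochNX_comb => -[_|j _].
  rewrite /meixner_coef !poch0 !expr0 fact0 !(mul1r, mulr1, invr1, mul0r, subr0).
  rewrite (poch_add2 (beta_nz m.+1)) pochS exprS /A_n -!natr1.
  by field; rewrite c_sub1_neq0 natr1 addrC beta_nz.
have := poch_neq0 j beta2_nz; have := fact_neq0 j.
have := beta_nz 0%N; have := beta_nz 1%N; rewrite addr0 => b1_nz b0_nz fj_nz pj_nz.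
rewrite /meixner_coef (poch_oppSn _ m j) (poch_add2 (beta_nz j.+1)) (pochS (beta + 2) j).
rewrite (pochS (- m%:R) j) (poch_add2 (beta_nz m.+1)) (pochS (beta + 2) m) !exprS factS natrM.
rewrite /A_n -!natr1.
field; rewrite (_ : 0 + 1 + 1 = 2 :> R) ?add0r // pj_nz fj_nz c_sub1_neq0 c_neq0.
by rewrite beta2_nz b1_nz b0_nz !natr1 pnatr_eq0 (addrC _ beta) !beta_nz.
Qed.

Lemma sgn_meixner_nonpos n b x : 0 < b -> x <= 0 ->
  0 < (-1) ^+ n * (meixner n b c).[x].
Proof.
move=> b_gt0 x_le0; rewrite meixnerE hornerZ !mulrA -exprMn.
have u_lt0 : 1 - c^-1 < 0 by rewrite subr_lt0 invf_gt1.
apply: mulr_gt0; first apply: mulr_gt0.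
- by apply: exprn_gt0; rewrite mulN1r oppr_gt0 pmulr_rlt0 // invr_lt0 subr_lt0.
- exact: poch_gt0.
rewrite /pochNX_comb horner_sum big_ord_recl /= /meixner_coef /pochNX big_ord0.
rewrite hornerZ hornerC.
rewrite !poch0 expr0 fact0 !mulr1 invr1; apply: lt_le_trans ltr01 _.
rewrite mulr1 lerDl; apply: sumr_ge0 => k _.
rewrite /bump add1n hornerZ horner_prod; apply: mulr_ge0; last first.
  by apply: prodr_ge0 => i _; rewrite !hornerE subr_ge0 (le_trans x_le0).
apply: divr_ge0; last by rewrite ltW // mulr_gt0 ?poch_gt0 ?ltr0n ?fact_gt0.
rewrite -[in _ ^+ _](card_ord k.+1) -prodr_const -big_split /=.
apply: prodr_ge0 => i _; rewrite mulr_le0 ?(ltW u_lt0) // addrC subr_le0 ler_nat.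
exact: ltnW (leq_trans (ltn_ord i) (ltn_ord k)).
Qed.

End MeixnerRelations.

Section MeixnerZeros.
Variables (R : rcfType) (c : R).
Hypotheses (c_gt0 : 0 < c) (c_lt1 : c < 1).

Lemma meixner_lambda_gt0 b m : 0 < b -> 0 < meixner_lambda c b m.+1.
Proof.
move=> b_gt0; apply: divr_gt0; last by rewrite exprn_gt0 // subr_gt0.
rewrite !mulr_gt0 // -natr1; have := ler0n R m; lra.
Qed.

Lemma meixner_interleaved b m : 0 < b -> exists y z : nat -> R,
  [/\ meixner m.+1 b c = \prod_(i < m.+1) ('X - (y i)%:P),
      meixner m b c = \prod_(i < m) ('X - (z i)%:P) & interleaved m y z].
Proof.
move=> b_gt0; have b_nz j : b + j%:R != 0 by rewrite gt_eqF // ltr_wpDr.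
elim: m => [|m [y [z [My Mz yz]]]].
  exists (fun=> meixner_b c b 0), (fun=> 0); split=> //.
  - by rewrite meixner1 ?big_ord1 ?gt_eqF.
  - by rewrite meixner0 big_ord0.
pose lambda := meixner_lambda c b m.+1.
have XMy_monic : ('X - (meixner_b c b m.+1)%:P) * meixner m.+1 b c \is monic.
  by rewrite My monicMl ?monicXsubC ?monic_prod_XsubC.
have size_XMy : size (('X - (meixner_b c b m.+1)%:P) * meixner m.+1 b c) = m.+3.
  rewrite size_monicM ?monicXsubC ?My ?monic_neq0 ?monic_prod_XsubC //.
  by rewrite size_XsubC size_prod_XsubC_ord.
have size_Mz : (size (lambda *: meixner m b c) < m.+3)%N.
  by rewrite (leq_ltn_trans (size_scale_leq _ _)) // Mz size_prod_XsubC_ord ltnS leqW.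
have rec := meixner_rec c_gt0 c_lt1 m b_nz.
have size_P : size (meixner m.+2 b c) = m.+3.
  by rewrite rec size_polyDl ?size_polyN size_XMy.
have P_monic : meixner m.+2 b c \is monic.
  by rewrite monicE rec lead_coefDl ?size_polyN ?size_XMy //; apply/monicP.
have sgn_P j : (j < m.+1)%N -> 0 < (-1) ^+ (m.+1 - j) * (meixner m.+2 b c).[y j].
  move=> lt_jm; rewrite rec hornerD hornerN hornerZ hornerM My.
  rewrite (rootP (root_prod_XsubC_ord _ lt_jm)) mulr0 add0r subSn // exprS.
  rewrite mulN1r mulNr mulrN opprK.
  by rewrite mulrCA mulr_gt0 ?meixner_lambda_gt0 // Mz interleaved_sgn_inner.
have [incr_y _] := interleaved_increasing yz.
have [x [Mx xy]] := monic_interleaved_roots P_monic size_P incr_y sgn_P.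
by exists x, y.
Qed.

Section ShiftedParameter.
Variables (beta : R) (m : nat) (y z : nat -> R).
Hypotheses (beta_nz : forall j, beta + j%:R != 0) (m_gt : beta / (c - 1) < m.+1%:R).
Hypotheses (My : meixner m.+1 (beta + 2) c = \prod_(i < m.+1) ('X - (y i)%:P))
           (Mz : meixner m (beta + 2) c = \prod_(i < m) ('X - (z i)%:P))
           (yz : interleaved m y z).

Let C := (m.+1%:R * (1 - c) + beta) / (m.+1%:R + beta).
Let D := m.+1%:R * c / (m.+1%:R + beta).
Let A := A_n beta c m.+1.

Let C_num_gt0 : 0 < m.+1%:R * (1 - c) + beta.
Proof. by move: m_gt; rewrite ltr_ndivrMr ?subr_lt0 // => ?; lra. Qed.

Let CD_den_gt0 : 0 < m.+1%:R + beta.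
Proof. have : 0 < m.+1%:R * c by rewrite mulr_gt0. have := C_num_gt0. lra. Qed.

Let C_gt0 : 0 < C. Proof. exact: divr_gt0. Qed.
Let D_gt0 : 0 < D. Proof. by rewrite divr_gt0 ?mulr_gt0. Qed.

Let contiguous : meixner m.+1 beta c =
  C *: \prod_(i < m.+1) ('X - (y i)%:P)
  + D *: (('X - A%:P) * \prod_(i < m) ('X - (z i)%:P)).
Proof. by rewrite -My -Mz meixner_contiguous. Qed.

Lemma meixner_shift_interleaved : exists x : nat -> R,
  meixner m.+1 beta c = \prod_(i < m.+1) ('X - (x i)%:P) /\ interleaved m x z.
Proof.
have XAMz_monic : ('X - A%:P) * \prod_(i < m) ('X - (z i)%:P) \is monic.
  by rewrite monicMl ?monicXsubC ?monic_prod_XsubC.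
have size_XAMz : size (('X - A%:P) * \prod_(i < m) ('X - (z i)%:P)) = m.+2.
  rewrite size_monicM ?monicXsubC ?monic_neq0 ?monic_prod_XsubC //.
  by rewrite size_XsubC size_prod_XsubC_ord.
have CD1 : C + D = 1 by rewrite /C /D; field; rewrite nat1r gt_eqF.
have My_monic : \prod_(i < m.+1) ('X - (y i)%:P) \is monic by exact: monic_prod_XsubC.
have /andP[P_monic /eqP size_P] := monic_affine My_monic XAMz_monic
  (etrans (size_prod_XsubC_ord y m.+1) (esym size_XAMz)) CD1.
rewrite -contiguous size_prod_XsubC_ord in P_monic size_P.
have [_ incr_z] := interleaved_increasing yz.
apply: monic_interleaved_roots P_monic size_P incr_z _ => j lt_jm.
rewrite contiguous hornerD !hornerZ hornerM (rootP (root_prod_XsubC_ord _ lt_jm)).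
rewrite !mulr0 addr0.
by rewrite mulrCA pmulr_rgt0 // interleaved_sgn_outer.
Qed.

Lemma meixner_shift_lt (x : nat -> R) :
  meixner m.+1 beta c = \prod_(i < m.+1) ('X - (x i)%:P) -> interleaved m x z ->
  forall i, (i <= m)%N -> (x i < y i) = (A_n beta c m.+1 < y i).
Proof.
move=> Mx xz i le_im; rewrite -(interleaved_sgn_cmp xz yz le_im) -Mx contiguous.
rewrite hornerD !hornerZ hornerM (rootP (root_prod_XsubC_ord _ (le_im : (i < m.+1)%N))).
rewrite mulr0 add0r hornerXsubC.
by rewrite mulrCA pmulr_rgt0 // mulrCA pmulr_lgt0 ?subr_gt0 // interleaved_sgn_inner.
Qed.

End ShiftedParameter.

Lemma meixner_zeros_interlace beta n :
  0 < beta + 2 -> (forall j, beta + j%:R != 0) -> (0 < n)%N -> beta / (c - 1) < n%:R ->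
  exists xs ys, [/\ zeros_enum (meixner n beta c) n xs,
                    zeros_enum (meixner n (beta + 2) c) n ys, 0 < ys`_0
                  & interlace n xs ys <-> A_n beta c n < ys`_0].
Proof.
move=> beta2_gt0 beta_nz; case: n => [//|m] _ m_gt.
have [y [z [My Mz yz]]] := meixner_interleaved m beta2_gt0.
have [x [Mx xz]] := meixner_shift_interleaved beta_nz m_gt My Mz yz.
have x_lt := meixner_shift_lt beta_nz m_gt My Mz yz Mx xz.
have [[incr_x _] [incr_y _]] := (interleaved_increasing xz, interleaved_increasing yz).
exists (mkseq x m.+1), (mkseq y m.+1); rewrite Mx My !nth_mkseq //.
split; [exact: zeros_enum_prod_XsubC | exact: zeros_enum_prod_XsubC | |].
  rewrite ltNge; apply/negP => y0_le0.
  have := sgn_meixner_nonpos c_gt0 c_lt1 m.+1 beta2_gt0 y0_le0.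
  by rewrite My (rootP (root_prod_XsubC_ord _ (ltn0Sn m))) mulr0 ltxx.
split=> [xy | A_lt_y0 i lt_im].
  by rewrite -x_lt //; have [+ _] := xy 0%N (ltn0Sn m); rewrite !nth_mkseq.
rewrite [(mkseq x _)`_i]nth_mkseq // [(mkseq y _)`_i]nth_mkseq // x_lt //.
rewrite (lt_le_trans A_lt_y0 (increasing_le incr_y (leq0n i) lt_im)).
split=> // lt_i1m; rewrite nth_mkseq //.
by have [/andP[lt_yz _] /andP[_ lt_zx]] := (yz i lt_i1m, xz i lt_i1m); apply: lt_trans lt_zx.
Qed.

End MeixnerZeros.

Lemma eq_nat_in_unit_interval (R : realDomainType) (a : R) n1 n2 :
  a < n1%:R < a + 1 -> a < n2%:R < a + 1 -> n1 = n2.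
Proof.
move=> /andP[lo1 hi1] /andP[lo2 hi2].
wlog lt12 : n1 n2 lo1 hi1 lo2 hi2 / (n1 < n2)%N.
  by move=> wlog; case: (ltngtP n1 n2) => // [/wlog|/wlog/esym]; apply.
have : n1%:R + 1 <= n2%:R :> R by rewrite natr1 ler_nat.
by clear lt12 => ?; exfalso; lra.
Qed.

Unset Implicit Arguments.

Theorem theorem4p4 (R : rcfType) (beta c : R) :
  -2 < beta -> beta < -1 -> 0 < c -> c < 1 ->
  (* (a) *)
  (forall n : nat, (3 <= n)%N ->
     beta / (c - 1) - (beta + 1) <= n%:R ->
     A_n beta c n <= 0 /\
     (exists xs ys, zeros_enum (meixner n beta c) n xs /\
                    zeros_enum (meixner n (beta + 2) c) n ys) /\
     (forall xs ys, zeros_enum (meixner n beta c) n xs ->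
                    zeros_enum (meixner n (beta + 2) c) n ys ->
                    interlace n xs ys))
  /\
  (* (b) *)
  ((forall n1 n2 : nat, (3 <= n1)%N -> (3 <= n2)%N ->
      beta / (c - 1) - (beta + 2) < n1%:R -> n1%:R < beta / (c - 1) - (beta + 1) ->
      beta / (c - 1) - (beta + 2) < n2%:R -> n2%:R < beta / (c - 1) - (beta + 1) ->
      n1 = n2) /\
   (forall ns : nat, (3 <= ns)%N ->
      beta / (c - 1) - (beta + 2) < ns%:R -> ns%:R < beta / (c - 1) - (beta + 1) ->
      0 < A_n beta c ns /\ A_n beta c ns < 1 /\
      (beta / (c - 1) < ns%:R ->
         (exists xs ys, zeros_enum (meixner ns beta c) ns xs /\
                        zeros_enum (meixner ns (beta + 2) c) ns ys) /\
         (forall xs ys, zeros_enum (meixner ns beta c) ns xs ->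
                        zeros_enum (meixner ns (beta + 2) c) ns ys ->
                        (interlace ns xs ys <-> A_n beta c ns < ys`_0))))).
Proof.
move=> beta_gt beta_lt c_gt0 c_lt1.
have beta2_gt0 : 0 < beta + 2 by lra.
have beta_nz j : beta + j%:R != 0.
  case: j => [|[|j]]; [rewrite addr0 lt_eqF | rewrite lt_eqF |
    rewrite gt_eqF // -!natr1; have := ler0n R j] => //; lra.
have zeros n (n_ge3 : (3 <= n)%N) :=
  meixner_zeros_interlace c_gt0 c_lt1 beta2_gt0 beta_nz (leq_trans (isT : (0 < 3)%N) n_ge3).
split=> [n n_ge3 n_ge | ].
  have [|xs [ys [Mxs Mys ys0_gt0 interlaceE]]] := zeros n n_ge3; first lra.
  split; first by rewrite /A_n; lra.
  split=> [|xs' ys' /(zeros_enum_uniq Mxs) <- /(zeros_enum_uniq Mys) <-].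
    by exists xs, ys.
  by apply/interlaceE/(le_lt_trans _ ys0_gt0); rewrite /A_n; lra.
split=> [n1 n2 _ _ lo1 hi1 lo2 hi2 | n n_ge3 lo hi].
  by apply: (@eq_nat_in_unit_interval _ (beta / (c - 1) - (beta + 2)));
    apply/andP; split; lra.
split; first by rewrite /A_n; lra.
split=> [|n_gt]; first by rewrite /A_n; lra.
have [xs [ys [Mxs Mys _ interlaceE]]] := zeros n n_ge3 n_gt.
split=> [|xs' ys' /(zeros_enum_uniq Mxs) <- /(zeros_enum_uniq Mys) <- //]; by exists xs, ys.
Qed.
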